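(* For all integers $Z\ge1$, $F\ge Z+1$, $\ell\ge1$ and $x\in\{0,1,\dots,\lceil\frac{Z+1}{F-Z}\rceil-1\}$, $$s\!\left(F,\ \ell\binom{F}{Z}-x,\ Z\right)=\frac{\ell\binom{F}{Z}(F-Z)}{Z+1}=\ell\binom{F}{Z+1},$$ and an RPDA$\left(F,\ell\binom{F}{Z}-x,Z\right)$ exists.
   Context: A placement delivery array $S$-PDA$(F,K,Z)$ is an $F\times K$ array $R=(r_{j,k})$, $1\le j\le F$, $1\le k\le K$, over a finite set $S$ such that: (1) each cell is either empty or contains an element of $S$; (2) each column contains exactly $Z$ empty cells; (3) each element of $S$ occurs at most once in each row and at most once in each column; (4) if two distinct nonempty cells satisfy $r_{j_1,k_1}=r_{j_2,k_2}=t\in S$, then the cells $r_{j_1,k_2}$ and $r_{j_2,k_1}$ are empty. For integers $F,K\ge1$, $0\le Z\le F$, define $s(F,K,Z)=\min\{|S| : \text{there exists an } S\text{-PDA}(F,K,Z)\}$. An RPDA$(F,K,Z)$ (restricted PDA) is an $S$-PDA$(F,K,Z)$ with $|S|=\left\lceil\frac{K(F-Z)}{Z+1}\right\rceil$. *)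

From mathcomp Require Import all_boot.
Set Implicit Arguments. Unset Strict Implicit. Unset Printing Implicit Defensive.

(* An F x K array over S: cell (j,k) is None (empty) or Some t with t in S. *)
Definition is_PDA (S : finType) (F K Z : nat) (R : 'I_F -> 'I_K -> option S) : Prop :=
  (forall k : 'I_K, #|[set j : 'I_F | R j k == None]| = Z) /\
  (forall (j : 'I_F) (k1 k2 : 'I_K) (t : S),
      R j k1 = Some t -> R j k2 = Some t -> k1 = k2) /\
  (forall (j1 j2 : 'I_F) (k : 'I_K) (t : S),
      R j1 k = Some t -> R j2 k = Some t -> j1 = j2) /\
  (forall (j1 j2 : 'I_F) (k1 k2 : 'I_K) (t : S),
      (j1, k1) <> (j2, k2) -> R j1 k1 = Some t -> R j2 k2 = Some t ->
      R j1 k2 = None /\ R j2 k1 = None).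

Definition PDA_exists (F K Z n : nat) : Prop :=
  exists (S : finType) (R : 'I_F -> 'I_K -> option S), #|S| = n /\ @is_PDA S F K Z R.

Definition s_is (F K Z n : nat) : Prop :=
  PDA_exists F K Z n /\
  (forall (S : finType) (R : 'I_F -> 'I_K -> option S), @is_PDA S F K Z R -> n <= #|S|).

Definition ceil_div (a b : nat) : nat := (a + b.-1) %/ b.

Definition RPDA_exists (F K Z : nat) : Prop :=
  PDA_exists F K Z (ceil_div (K * (F - Z)) Z.+1).

From mathcomp Require Import all_boot zify.

Set Implicit Arguments.
Unset Strict Implicit.
Unset Printing Implicit Defensive.

(* Every column has F - Z filled cells, so a PDA has K (F - Z) of them.  By (3)
   the occurrences of a symbol lie in distinct rows, and by (4) these rows are,
   apart from that of one occurrence (j0, k0), rows of empty cells of column k0;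
   hence a symbol fills at most Z + 1 cells and |S| >= ceil(K (F - Z) / (Z + 1)).
   The bound is attained by taking as columns l copies of the Z-subsets T of the
   rows and as symbols l copies of the (Z + 1)-subsets, cell (j, T) holding T + j
   when j is not in T; any K <= l C(F, Z) of these columns form a PDA with
   l C(F, Z + 1) symbols, and for K = l C(F, Z) - x the bound on x makes
   ceil(K (F - Z) / (Z + 1)) equal to l C(F, Z + 1). *)

Lemma ceil_div_leq a b n : 0 < b -> (ceil_div a b <= n) = (a <= n * b).
Proof. by move=> b_gt0; rewrite /ceil_div -ltnS ltn_divLR // mulSn; lia. Qed.

Lemma ceil_div_mulB n b p : p < b -> ceil_div (n * b - p) b = n.
Proof.
move=> lt_pb; have b_gt0 : 0 < b by lia.
case: n => [|n].
  by rewrite /ceil_div mul0n sub0n add0n divn_small // ltn_predL.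
rewrite /ceil_div (_ : _ + _ = n.+1 * b + (b.-1 - p)); last by rewrite mulSn; lia.
by rewrite divnMDl // divn_small ?addn0 //; lia.
Qed.

Lemma bin_mul_sub n m : 'C(n, m) * (n - m) = 'C(n, m.+1) * m.+1.
Proof. by rewrite mulnC -mul_bin_down mul_bin_diag mulnC. Qed.

Section PDALowerBound.

Variables (S : finType) (F K Z : nat) (R : 'I_F -> 'I_K -> option S).
Hypothesis PDA_R : @is_PDA S F K Z R.

Definition occurrences (t : S) : {set 'I_F * 'I_K} :=
  [set p : 'I_F * 'I_K | R p.1 p.2 == Some t].

Lemma card_occurrences_le t : #|occurrences t| <= Z.+1.
Proof.
move: PDA_R => [emptyR [rowR [_ crossR]]].
have [/eqP->|/set0Pn [[j0 k0] occ0]] := boolP (occurrences t == set0).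
  by rewrite cards0.
have row_inj : {in occurrences t &, injective (fun p : 'I_F * 'I_K => p.1)}.
  move=> [j1 k1] [j2 k2]; rewrite !inE /= => /eqP R1 /eqP R2 ej; subst j2.
  by rewrite (rowR _ _ _ _ R1 R2).
rewrite -(card_in_imset row_inj).
apply: (@leq_trans #|j0 |: [set j | R j k0 == None]|).
  apply/subset_leq_card/subsetP => _ /imsetP [[j k] occ ->] /=.
  have [[-> _]|ne] := eqVneq (j, k) (j0, k0); first exact: setU11.
  move: occ occ0; rewrite !inE => /eqP R1 /eqP R0.
  by have [-> _] := crossR _ _ _ _ _ (elimN eqP ne) R1 R0; rewrite orbT.
by rewrite cardsU1 emptyR; case: (_ \notin _).
Qed.

Lemma card_filled_cells :
  #|[set p : 'I_F * 'I_K | R p.1 p.2 != None]| = K * (F - Z).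
Proof.
move: PDA_R => [emptyR _].
rewrite -sum1_card big_mkcond /=; under eq_bigr do rewrite inE.
rewrite -(pair_bigA _ (fun j k => if R j k != None then 1 else 0)) /=.
rewrite exchange_big /= -[K in RHS]card_ord -sum_nat_const.
apply: eq_bigr => k _.
have -> : F - Z = #|~: [set j | R j k == None]|.
  by rewrite -[F in F - Z]card_ord -(cardsC [set j | R j k == None]) emptyR addKn.
rewrite -sum1_card [RHS]big_mkcond /=.
by apply: eq_bigr => j _; rewrite !inE.
Qed.

Lemma card_filled_cells_occurrences :
  #|[set p : 'I_F * 'I_K | R p.1 p.2 != None]| = \sum_(t : S) #|occurrences t|.
Proof.
rewrite -sum1_card big_mkcond /=.
under [RHS]eq_bigr do rewrite -sum1_card big_mkcond /=.
rewrite exchange_big /=; apply: eq_bigr => p _.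
under eq_bigr do rewrite inE; rewrite inE.
case: (R p.1 p.2) => [t0|]; last by rewrite big1.
rewrite (bigD1 t0) //= eqxx big1 // => t ne_t.
by case: eqP => // -[e]; rewrite e eqxx in ne_t.
Qed.

Lemma PDA_card_lower : K * (F - Z) <= #|S| * Z.+1.
Proof.
rewrite -card_filled_cells card_filled_cells_occurrences.
by rewrite -sum_nat_const leq_sum // => t _; apply: card_occurrences_le.
Qed.

End PDALowerBound.

Lemma PDA_card_ge_ceil (S : finType) F K Z (R : 'I_F -> 'I_K -> option S) :
  @is_PDA S F K Z R -> ceil_div (K * (F - Z)) Z.+1 <= #|S|.
Proof. by move=> PDA_R; rewrite ceil_div_leq //; apply: PDA_card_lower PDA_R. Qed.

Lemma RPDA_s_is F K Z :
  RPDA_exists F K Z -> s_is F K Z (ceil_div (K * (F - Z)) Z.+1).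
Proof. by move=> RPDA; split=> // S R; apply: PDA_card_ge_ceil. Qed.

Section SubsetPDA.

Variables F Z l : nat.

Definition subsets_of_card k : Type := {T : {set 'I_F} | #|T| == k}.
Definition subset_col := ('I_l * subsets_of_card Z)%type.
Definition subset_sym := ('I_l * subsets_of_card Z.+1)%type.

(* The final [None] branch is unreachable: [j |: T] has Z + 1 elements. *)
Definition subset_cell (j : 'I_F) (c : subset_col) : option subset_sym :=
  if j \in val c.2 then None else
  if insub (j |: val c.2) : option (subsets_of_card Z.+1) is Some U
  then Some (c.1, U) else None.

Lemma subset_cell_None j c : (subset_cell j c == None) = (j \in val c.2).
Proof.
rewrite /subset_cell; case: ifP => // notin_j; case: insubP => // card_jT.
by rewrite cardsU1 notin_j (eqP (valP c.2)) eqxx in card_jT.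
Qed.

Lemma subset_cell_Some j c t : subset_cell j c = Some t ->
  [/\ j \notin val c.2, t.1 = c.1 & val t.2 = j |: val c.2].
Proof.
rewrite /subset_cell; case: ifP => // notin_j; case: insubP => // U _ eU [<-].
by split=> //; apply/negbT.
Qed.

Lemma subset_cell_inj j c1 c2 t :
  subset_cell j c1 = Some t -> subset_cell j c2 = Some t -> c1 = c2.
Proof.
move: c1 c2 => [i1 T1] [i2 T2] /subset_cell_Some [/= nT1 <- eT1].
move=> /subset_cell_Some [/= nT2 -> eT2]; congr pair; apply: val_inj => /=.
by rewrite -(setU1K nT1) -(setU1K nT2) -eT1 -eT2.
Qed.

Lemma subset_cell_mem j1 j2 c1 c2 t :
  subset_cell j1 c1 = Some t -> subset_cell j2 c2 = Some t ->
  j1 != j2 -> j1 \in val c2.2.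
Proof.
move=> /subset_cell_Some [_ _ e1] /subset_cell_Some [_ _ e2] ne.
have : j1 \in val t.2 by rewrite e1 setU11.
by rewrite e2 in_setU1 (negbTE ne).
Qed.

Lemma subset_PDA K (c : 'I_K -> subset_col) :
  injective c -> @is_PDA subset_sym F K Z (fun j k => subset_cell j (c k)).
Proof.
move=> c_inj; split; [|split; [|split]].
- move=> k; rewrite -[RHS](eqP (valP (c k).2)).
  by apply: eq_card => j; rewrite inE subset_cell_None.
- by move=> j k1 k2 t R1 R2; apply: c_inj; apply: subset_cell_inj R1 R2.
- move=> j1 j2 k t R1 R2; apply/eqP/negPn/negP => ne.
  by move: (subset_cell_mem R1 R2 ne); rewrite -subset_cell_None R1.
- move=> j1 j2 k1 k2 t ne R1 R2; have [ej|nej] := eqVneq j1 j2.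
    by subst j2; case: ne; rewrite (c_inj _ _ (subset_cell_inj R1 R2)).
  split; apply/eqP; rewrite subset_cell_None.
    exact: subset_cell_mem R1 R2 nej.
  by apply: subset_cell_mem R2 R1 _; rewrite eq_sym.
Qed.

Lemma card_subsets_of_card k : #|{: subsets_of_card k}| = 'C(F, k).
Proof.
rewrite card_sig -[F in 'C(F, _)]card_ord -card_draws.
by apply: eq_card => U; rewrite !inE.
Qed.

Lemma card_subset_sym : #|{: subset_sym}| = l * 'C(F, Z.+1).
Proof. by rewrite card_prod card_ord card_subsets_of_card. Qed.

Lemma card_subset_col : #|{: subset_col}| = l * 'C(F, Z).
Proof. by rewrite card_prod card_ord card_subsets_of_card. Qed.

Lemma subset_PDA_exists K :
  K <= l * 'C(F, Z) -> PDA_exists F K Z (l * 'C(F, Z.+1)).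
Proof.
rewrite -card_subset_col => le_K.
pose c (k : 'I_K) : subset_col := enum_val (widen_ord le_K k).
have c_inj : injective c by move=> k1 k2 /enum_val_inj /(congr1 val) /= /val_inj.
exists _, (fun j k => subset_cell j (c k)).
by split; [exact: card_subset_sym | exact: subset_PDA].
Qed.

End SubsetPDA.

Theorem mainTheorem10 (Z F l x : nat) :
  1 <= Z -> Z.+1 <= F -> 1 <= l ->
  x < ceil_div Z.+1 (F - Z) ->
  s_is F (l * 'C(F, Z) - x) Z (l * 'C(F, Z.+1)) /\
  l * 'C(F, Z) * (F - Z) = l * 'C(F, Z.+1) * Z.+1 /\
  RPDA_exists F (l * 'C(F, Z) - x) Z.
Proof.
move=> _ lt_ZF _ lt_x_ceil.
have small_x : x * (F - Z) < Z.+1.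
  by move: lt_x_ceil; rewrite ltnNge ceil_div_leq ?subn_gt0 // -ltnNge.
have binE : l * 'C(F, Z) * (F - Z) = l * 'C(F, Z.+1) * Z.+1.
  by rewrite -!mulnA bin_mul_sub.
have ceilE : ceil_div ((l * 'C(F, Z) - x) * (F - Z)) Z.+1 = l * 'C(F, Z.+1).
  by rewrite mulnBl binE ceil_div_mulB.
have RPDA : RPDA_exists F (l * 'C(F, Z) - x) Z.
  by rewrite /RPDA_exists ceilE; apply: subset_PDA_exists; apply: leq_subr.
by split; [rewrite -ceilE; apply: RPDA_s_is | split].
Qed.
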